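(* Let $p$ be a prime, let $\{t_i\mid i\in\mathbb N\}$ be algebraically independent over $\mathbb F_p$, let $k=\mathbb F_p(\{t_i\mid i\in\mathbb N\})$ with algebraic closure $\overline k$, and let $\sigma(x)=\sum_{i=1}^\infty t_i^{1/p}x^i\in\overline k[[x]]$. Let $R=k[u,v]_{(u,v)}$ and let $\pi:R\to\overline k[[x]]$ be the $k$-algebra homomorphism with $\pi(u)=x$, $\pi(v)=\sigma(x)$. Then $\pi$ is injective, so the $x$-adic order valuation on $\overline k[[x]]$ induces a rank 1 valuation $\nu$ of the quotient field of $R$, and the valuation ring $V$ of $\nu$ has residue field $V/m_V\cong k(t_1^{1/p})$, a finite extension of $k$ (whereas the field $k(\{t_i^{1/p}\mid i\in\mathbb N\})$ generated by the coefficients of $\sigma$ has infinite degree over $k$). *)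

From HB Require Import structures.
From mathcomp Require Import all_boot all_order all_algebra.
Set Implicit Arguments. Unset Strict Implicit. Unset Printing Implicit Defensive.
Import Order.TTheory GRing.Theory Num.Theory.
Local Open Scope ring_scope.

Definition subfield_closed (K : fieldType) (F : K -> Prop) : Prop :=
  [/\ F 1,
      (forall x y, F x -> F y -> F (x - y)),
      (forall x y, F x -> F y -> F (x * y)) &
      (forall x, F x -> F x^-1)].

Definition in_gen_field (K : fieldType) (S : K -> Prop) (x : K) : Prop :=
  forall F : K -> Prop, subfield_closed F -> (forall y, S y -> F y) -> F x.

Definition in_ext_gen (k L : fieldType) (iota : k -> L) (S : L -> Prop)
  (x : L) : Prop :=
  in_gen_field (fun y => (exists a, y = iota a) \/ S y) x.

(* The family t : nat -> k is algebraically independent over the prime field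
   of k: distinct monomials in finitely many t_i are linearly independent
   over the prime field (coefficients are integers, mapped into k). *)
Definition alg_indep_prime (k : fieldType) (t : nat -> k) : Prop :=
  forall (n : nat) (S : seq {ffun 'I_n -> nat}) (c : {ffun 'I_n -> nat} -> int),
    uniq S ->
    \sum_(e <- S) (c e)%:~R * \prod_(i < n) t i ^+ e i = 0 ->
    forall e, e \in S -> (c e)%:~R = 0 :> k.

Definition lin_indep_over (k L : fieldType) (iota : k -> L) (n : nat)
  (e : 'I_n -> L) : Prop :=
  forall c : 'I_n -> k, \sum_(i < n) iota (c i) * e i = 0 -> forall i, c i = 0.

Definition spans_over (k L : fieldType) (iota : k -> L) (P : L -> Prop)
  (n : nat) (e : 'I_n -> L) : Prop :=
  forall x, P x -> exists c : 'I_n -> k, x = \sum_(i < n) iota (c i) * e i.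

Definition sigmaN (L : fieldType) (s : nat -> L) (N : nat) : {poly L} :=
  \sum_(1 <= i < N) s i *: 'X^i.

(* Elements of k[u,v] are represented as P : {poly {poly k}},
   P = sum_j P_j(u) v^j.  pi(P) = sum_j P_j(x) sigma(x)^j in L[[x]];
   its n-th coefficient is computed from the truncation of sigma at
   degree n (higher terms of sigma do not affect the coefficient of x^n). *)
Definition pi_coef (k L : fieldType) (iota : {rmorphism k -> L})
  (s : nat -> L) (P : {poly {poly k}}) (n : nat) : L :=
  ((map_poly (map_poly iota) P).[sigmaN s n.+1])`_n.

Definition pi_ord (k L : fieldType) (iota : {rmorphism k -> L})
  (s : nat -> L) (P : {poly {poly k}}) (n : nat) : Prop :=
  pi_coef iota s P n != 0 /\ forall m, (m < n)%N -> pi_coef iota s P m = 0.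

(* the quotient field of R = k[u,v]_(u,v), which is the quotient field of k[u,v] *)
Definition QF (k : fieldType) := {fraction {poly {poly k}}}.

Definition tofracK (k : fieldType) (P : {poly {poly k}}) : QF k :=
  FracField.tofrac P.

Definition in_V (k L : fieldType) (iota : {rmorphism k -> L}) (s : nat -> L)
  (z : QF k) : Prop :=
  exists (f g : {poly {poly k}}) (n : nat),
    [/\ g != 0, z = tofracK f / tofracK g, pi_ord iota s g n &
        forall m, (m < n)%N -> pi_coef iota s f m = 0].

Definition in_mV (k L : fieldType) (iota : {rmorphism k -> L}) (s : nat -> L)
  (z : QF k) : Prop :=
  exists (f g : {poly {poly k}}) (n : nat),
    [/\ g != 0, z = tofracK f / tofracK g, pi_ord iota s g n &
        forall m, (m <= n)%N -> pi_coef iota s f m = 0].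

(* Write s_i = t_i^(1/p), rho(x) = sigma(x)^p = sum_i t_i x^(ip) in k[[x]] and
   sigma = x w with w(0) = s_1.  Splitting f(u, v) = sum_(j<p) f_j(u, v^p) v^j
   gives pi(f) = sum_(j<p) x^j f_j(x, rho(x)) w(x)^j.  Since rho is
   transcendental over k(x), the least order m0 of the summands is finite and
   the x^m0-coefficient of pi(f) is sum_j c_j s_1^j with c_j in k not all zero;
   it is nonzero because 1, s_1, ..., s_1^(p-1) are k-free.  Hence pi is
   injective, and leading coefficients give a residue map V -> k(s_1) with
   kernel m_V, onto since sum_j c_j s_1^j is the residue of
   (sum_j c_j u^(p-1-j) v^j) / u^(p-1). *)

From HB Require Import structures.
From mathcomp Require Import all_boot all_order all_algebra.
From Stdlib Require Import ClassicalEpsilon.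
Set Implicit Arguments. Unset Strict Implicit. Unset Printing Implicit Defensive.
Import GRing.Theory.
Local Open Scope ring_scope.

Section GeneratedField.
Variable K : fieldType.
Implicit Types F S : K -> Prop.

Lemma subfield1 F : subfield_closed F -> F 1. Proof. by case. Qed.
Lemma subfieldB F x y : subfield_closed F -> F x -> F y -> F (x - y).
Proof. by case=> _ hB _ _; apply: hB. Qed.
Lemma subfieldM F x y : subfield_closed F -> F x -> F y -> F (x * y).
Proof. by case=> _ _ hM _; apply: hM. Qed.
Lemma subfieldV F x : subfield_closed F -> F x -> F x^-1.
Proof. by case=> _ _ _ hV; apply: hV. Qed.
Lemma subfield0 F : subfield_closed F -> F 0.
Proof. by move=> hF; rewrite -(subrr 1); apply: subfieldB => //; apply: subfield1. Qed.
Lemma subfieldD F x y : subfield_closed F -> F x -> F y -> F (x + y).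
Proof.
move=> hF hx hy; rewrite -[y]opprK -[- y]sub0r.
by apply: subfieldB => //; apply: subfieldB => //; apply: subfield0.
Qed.
Lemma subfield_div F x y : subfield_closed F -> F x -> F y -> F (x / y).
Proof. by move=> hF hx hy; apply: subfieldM => //; apply: subfieldV. Qed.
Lemma subfieldX F x m : subfield_closed F -> F x -> F (x ^+ m).
Proof.
move=> hF hx; elim: m => [|m IH]; first by rewrite expr0; apply: subfield1.
by rewrite exprS; apply: subfieldM.
Qed.
Lemma subfield_sum F I (r : seq I) (P : pred I) (G : I -> K) :
  subfield_closed F -> (forall i, P i -> F (G i)) -> F (\sum_(i <- r | P i) G i).
Proof.
move=> hF hG; elim/big_rec: _ => [|i x Pi Fx]; first exact: subfield0.
by apply: subfieldD => //; apply: hG.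
Qed.

Lemma gen_field_closed S : subfield_closed (in_gen_field S).
Proof.
split.
- by move=> F hF _; apply: subfield1.
- by move=> x y hx hy F hF hS; apply: subfieldB => //; [apply: hx | apply: hy].
- by move=> x y hx hy F hF hS; apply: subfieldM => //; [apply: hx | apply: hy].
- by move=> x hx F hF hS; apply: subfieldV => //; apply: hx.
Qed.
Lemma gen_field_sub S y : S y -> in_gen_field S y.
Proof. by move=> hy F _ hS; apply: hS. Qed.
Lemma gen_field_min S F x : subfield_closed F -> (forall y, S y -> F y) ->
  in_gen_field S x -> F x.
Proof. by move=> hF hS hx; apply: hx. Qed.
Lemma gen_field_mono S S' x : (forall y, S y -> S' y) ->
  in_gen_field S x -> in_gen_field S' x.
Proof.
move=> hSS; apply: gen_field_min; first exact: gen_field_closed.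
by move=> y hy; apply: gen_field_sub; apply: hSS.
Qed.
End GeneratedField.

Lemma finite_bound (Q : nat -> nat -> Prop) m :
  (forall N N' j, (N <= N')%N -> Q N j -> Q N' j) ->
  (forall j, (j < m)%N -> exists N, Q N j) -> exists N, forall j, (j < m)%N -> Q N j.
Proof.
move=> hQ; elim: m => [|m IH] h; first by exists 0%N.
have [N1 h1] := IH (fun j hj => h j (ltnW hj)).
have [N2 h2] := h m (ltnSn m).
exists (maxn N1 N2) => j; rewrite ltnS leq_eqVlt => /orP[/eqP ->|hj].
- by apply: hQ h2; apply: leq_maxr.
- by apply: hQ (h1 j hj); apply: leq_maxl.
Qed.

Section GeneratedByIndices.
Variables (k : fieldType) (t : nat -> k).

Definition gen_idx (P : pred nat) (x : k) :=
  in_gen_field (fun y => exists2 i, P i & y = t i) x.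

Lemma gen_idx_mono (P P' : pred nat) x : (forall i, P i -> P' i) ->
  gen_idx P x -> gen_idx P' x.
Proof. by move=> hP; apply: gen_field_mono => y [i Pi ->]; exists i => //; apply: hP. Qed.

Lemma gen_idx_bounded_mono (P : pred nat) N N' x : (N <= N')%N ->
  gen_idx (fun i => (i < N)%N && P i) x -> gen_idx (fun i => (i < N')%N && P i) x.
Proof. by move=> hN; apply: gen_idx_mono => i /andP[hi ->]; rewrite (leq_trans hi hN). Qed.

Lemma gen_idx_finite (P : pred nat) x : gen_idx P x ->
  exists N, gen_idx (fun i => (i < N)%N && P i) x.
Proof.
move=> hx; pose G y := exists N, gen_idx (fun i => (i < N)%N && P i) y.
have hG : subfield_closed G.
  have hclosed N := gen_field_closed (fun y => exists2 i, (i < N)%N && P i & y = t i).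
  split.
  - by exists 0%N; apply: subfield1 (hclosed 0%N).
  - move=> a b [N1 h1] [N2 h2]; exists (maxn N1 N2); apply: subfieldB (hclosed _) _ _.
    + by apply: gen_idx_bounded_mono h1; apply: leq_maxl.
    + by apply: gen_idx_bounded_mono h2; apply: leq_maxr.
  - move=> a b [N1 h1] [N2 h2]; exists (maxn N1 N2); apply: subfieldM (hclosed _) _ _.
    + by apply: gen_idx_bounded_mono h1; apply: leq_maxl.
    + by apply: gen_idx_bounded_mono h2; apply: leq_maxr.
  - by move=> a [N h]; exists N; apply: subfieldV (hclosed N) h.
apply: (gen_field_min hG _ hx) => y [i Pi ->]; exists i.+1.
by apply: gen_field_sub; exists i; rewrite ?ltnSn.
Qed.

Lemma gen_idx_finite_family (P : pred nat) (c : nat -> k) m :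
  (forall i, (i < m)%N -> gen_idx P (c i)) ->
  exists N, forall i, (i < m)%N -> gen_idx (fun j => (j < N)%N && P j) (c i).
Proof.
move=> hc; apply: finite_bound => [N N' i|i hi]; first exact: gen_idx_bounded_mono.
exact: gen_idx_finite (hc i hi).
Qed.
End GeneratedByIndices.

(* x |-> x ^+ q is additive as soon as q is a product of characteristic
   primes; this covers both q = 1 and the Frobenius exponent q = p. *)
Lemma expr_sum_pchar (R : comNzRingType) (q : nat) (I : Type) (r : seq I)
    (P : pred I) (F : I -> R) :
  [pchar R].-nat q -> (\sum_(i <- r | P i) F i) ^+ q = \sum_(i <- r | P i) F i ^+ q.
Proof.
move=> hq; have q_gt0 : (0 < q)%N by case/andP: hq.
elim/big_rec2: _ => [|i y x _ <-]; first by rewrite expr0n gtn_eqF.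
exact: exprDn_pchar.
Qed.

Lemma big_pred1_seq_uniq (R : nmodType) (I : eqType) (r : seq I) (i : I) (F : I -> R) :
  uniq r -> i \in r -> \sum_(j <- r | j == i) F j = F i.
Proof.
move=> ur ir; rewrite big_mkcond (bigD1_seq i) //= eqxx big1 ?addr0 //.
by move=> j /negbTE ->.
Qed.

(* Integer polynomial expressions in t_0, ..., t_(n-1), represented as lists
   of (exponent vector, integer coefficient) terms, together with the value
   map into k. *)
Section IntegerPolynomials.
Variables (k : fieldType) (t : nat -> k) (n : nat).

Definition monom := {ffun 'I_n -> nat}.
Definition monom_val (e : monom) : k := \prod_(i < n) t i ^+ e i.
Definition monom_mul (e1 e2 : monom) : monom := [ffun i => (e1 i + e2 i)%N].
Definition monom1 : monom := [ffun _ => 0%N].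
Definition monom_exp (q : nat) (e : monom) : monom := [ffun i => (q * e i)%N].

Lemma monom_valM e1 e2 : monom_val (monom_mul e1 e2) = monom_val e1 * monom_val e2.
Proof. by rewrite /monom_val -big_split; apply: eq_bigr => i _; rewrite ffunE exprD. Qed.
Lemma monom_val1 : monom_val monom1 = 1.
Proof. by rewrite /monom_val big1 // => i _; rewrite ffunE expr0. Qed.
Lemma monom_valX q e : monom_val (monom_exp q e) = monom_val e ^+ q.
Proof. by rewrite /monom_val -prodrXl; apply: eq_bigr => i _; rewrite ffunE mulnC exprM. Qed.
Lemma monom_expI q : (0 < q)%N -> injective (monom_exp q).
Proof.
move=> q_gt0 a b h; apply/ffunP => i; have := congr1 (fun f : monom => f i) h.
by rewrite !ffunE => /eqP; rewrite eqn_pmul2l // => /eqP.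
Qed.
Lemma monom_mulIl (a b r : monom) : monom_mul a r = monom_mul b r -> a = b.
Proof.
move=> h; apply/ffunP => i; have := congr1 (fun f : monom => f i) h.
by rewrite !ffunE => /addIn.
Qed.

Definition zterms := seq (monom * int).
Definition zval (l : zterms) : k := \sum_(x <- l) x.2%:~R * monom_val x.1.
Definition zcoef (l : zterms) (e : monom) : int := \sum_(x <- l | x.1 == e) x.2.

Lemma zval_collect l :
  zval l = \sum_(e <- undup (map fst l)) (zcoef l e)%:~R * monom_val e.
Proof.
rewrite /zcoef.
under eq_bigr => e _ do rewrite rmorph_sum mulr_suml.
rewrite (exchange_big_dep predT) //=; apply: eq_big_seq => x xl.
under eq_bigl => e do rewrite eq_sym.
rewrite (big_pred1_seq_uniq (fun e => x.2%:~R * monom_val e)) ?undup_uniq //.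
by rewrite mem_undup; apply: map_f.
Qed.

Lemma zcoef_notin l e : e \notin map fst l -> zcoef l e = 0.
Proof.
move=> en; rewrite /zcoef big_seq_cond big1 // => x /andP[xl /eqP ex].
by case/negP: en; rewrite -ex; apply: map_f.
Qed.

Lemma zval_eq0_coef : alg_indep_prime t -> forall l, zval l = 0 ->
  forall e, (zcoef l e)%:~R = 0 :> k.
Proof.
move=> hI l hl e; have [ein|enot] := boolP (e \in map fst l); last by rewrite zcoef_notin.
have := hI n (undup (map fst l)) (zcoef l) (undup_uniq _).
by rewrite -zval_collect hl => /(_ erefl e); apply; rewrite mem_undup.
Qed.

Lemma zval_coef0 l : (forall e, (zcoef l e)%:~R = 0 :> k) -> zval l = 0.
Proof. by move=> h; rewrite zval_collect big1 // => e _; rewrite h mul0r. Qed.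

Definition zmul (l1 l2 : zterms) : zterms :=
  [seq (monom_mul x.1 y.1, x.2 * y.2) | x <- l1, y <- l2].
Definition zopp (l : zterms) : zterms := map (fun x => (x.1, - x.2)) l.
Definition zone : zterms := [:: (monom1, 1)].
Definition zshift (r : monom) (l : zterms) : zterms :=
  map (fun x => (monom_mul x.1 r, x.2)) l.
(* termwise q-th power; it computes the q-th power when x |-> x ^+ q is additive *)
Definition zfrob (q : nat) (l : zterms) : zterms :=
  map (fun x => (monom_exp q x.1, x.2 ^+ q)) l.

Lemma zval_nil : zval [::] = 0. Proof. by rewrite /zval big_nil. Qed.
Lemma zval_cat l1 l2 : zval (l1 ++ l2) = zval l1 + zval l2.
Proof. by rewrite /zval big_cat. Qed.
Lemma zval_flatten (ll : seq zterms) : zval (flatten ll) = \sum_(l <- ll) zval l.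
Proof. by rewrite /zval big_flatten. Qed.
Lemma zval_opp l : zval (zopp l) = - zval l.
Proof. by rewrite /zval big_map -sumrN; apply: eq_bigr => x _; rewrite /= mulrNz mulNr. Qed.
Lemma zval_one : zval zone = 1.
Proof. by rewrite /zval big_seq1 /= monom_val1 mulr1. Qed.
Lemma zval_shift r l : zval (zshift r l) = zval l * monom_val r.
Proof.
by rewrite /zval big_map mulr_suml; apply: eq_bigr => x _; rewrite /= monom_valM mulrA.
Qed.
Lemma zval_mul l1 l2 : zval (zmul l1 l2) = zval l1 * zval l2.
Proof.
elim: l1 => [|x l1 IH]; first by rewrite /zmul /= zval_nil mul0r.
rewrite /zmul /= zval_cat -/(zmul l1 l2) IH /zval big_cons mulrDl; congr (_ + _).
rewrite big_map mulr_sumr; apply: eq_bigr => y _ /=.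
by rewrite intrM monom_valM mulrACA.
Qed.
Lemma zval_frob q l : [pchar k].-nat q -> zval (zfrob q l) = zval l ^+ q.
Proof.
move=> hq; rewrite /zval big_map expr_sum_pchar //; apply: eq_bigr => x _ /=.
by rewrite exprMn rmorphXn monom_valX.
Qed.

Lemma zcoef_flatten (ll : seq zterms) e : zcoef (flatten ll) e = \sum_(l <- ll) zcoef l e.
Proof. by rewrite /zcoef big_flatten. Qed.
Lemma zcoef_shift_frob q r l e :
  zcoef (zshift r (zfrob q l)) e = \sum_(x <- l | monom_mul (monom_exp q x.1) r == e) x.2 ^+ q.
Proof. by rewrite /zcoef /zshift /zfrob -map_comp big_map. Qed.
End IntegerPolynomials.

Section FractionsAvoiding.
Variables (k : fieldType) (t : nat -> k) (n M : nat).
Local Notation monom := (monom n).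
Local Notation zterms := (zterms n).
Local Notation zval := (zval t).

Definition monom_avoids (e : monom) : bool :=
  [forall i : 'I_n, (i == M :> nat) ==> (e i == 0%N)].
Definition terms_avoid (l : zterms) : bool := all (fun x => monom_avoids x.1) l.

Lemma monom_avoidsM e1 e2 :
  monom_avoids e1 -> monom_avoids e2 -> monom_avoids (monom_mul e1 e2).
Proof.
move=> /forallP h1 /forallP h2; apply/forallP => i; apply/implyP => hi.
by rewrite ffunE (eqP (implyP (h1 i) hi)) (eqP (implyP (h2 i) hi)).
Qed.
Lemma terms_avoid_cat l1 l2 : terms_avoid (l1 ++ l2) = terms_avoid l1 && terms_avoid l2.
Proof. exact: all_cat. Qed.
Lemma terms_avoid_opp l : terms_avoid (zopp l) = terms_avoid l.
Proof. exact: all_map. Qed.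
Lemma terms_avoid_one : terms_avoid (zone n).
Proof. by rewrite /terms_avoid /= andbT; apply/forallP => i; rewrite ffunE eqxx implybT. Qed.
Lemma terms_avoid_mul l1 l2 : terms_avoid l1 -> terms_avoid l2 -> terms_avoid (zmul l1 l2).
Proof.
move=> /allP h1 /allP h2; apply/allP => z /allpairsP[[x y] [xl yl ->]] /=.
by apply: monom_avoidsM; [apply: h1 | apply: h2].
Qed.

Definition zfrac (x : k) := exists a b : zterms,
  [/\ terms_avoid a, terms_avoid b, zval b != 0 & x * zval b = zval a].

Lemma zfrac_closed : subfield_closed zfrac.
Proof.
split.
- exists (zone n), (zone n).
  by rewrite terms_avoid_one zval_one oner_eq0 mul1r.
- move=> x y [a [b [oa ob nb eb]]] [a' [b' [oa' ob' nb' eb']]].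
  exists (zmul a b' ++ zopp (zmul a' b)), (zmul b b'); split.
  + by rewrite terms_avoid_cat terms_avoid_opp !terms_avoid_mul.
  + by rewrite terms_avoid_mul.
  + by rewrite zval_mul mulf_neq0.
  + rewrite zval_cat zval_opp !zval_mul -eb -eb' mulrBl.
    by congr (_ - _); rewrite mulrA // mulrAC.
- move=> x y [a [b [oa ob nb eb]]] [a' [b' [oa' ob' nb' eb']]].
  exists (zmul a a'), (zmul b b'); rewrite !terms_avoid_mul //.
  by rewrite !zval_mul mulf_neq0 // -eb -eb' mulrACA.
- move=> x [a [b [oa ob nb eb]]].
  have [->|x0] := eqVneq x 0.
    exists [::], (zone n).
    by rewrite invr0 mul0r zval_nil terms_avoid_one zval_one oner_eq0.
  exists b, a; split=> //; first by rewrite -eb mulf_neq0.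
  by rewrite -eb mulrA mulVf // mul1r.
Qed.

Lemma zfrac_t i : (i < n)%N -> i != M -> zfrac (t i).
Proof.
move=> hi hM; pose ei : monom := [ffun j => (j == Ordinal hi) : nat].
exists [:: (ei, 1)], (zone n); split.
- rewrite /terms_avoid /= andbT; apply/forallP => j; apply/implyP => /eqP jM.
  rewrite ffunE; case: (j =P Ordinal hi) => [jE|//]; case/negP: hM.
  by rewrite -jM jE.
- exact: terms_avoid_one.
- by rewrite zval_one oner_eq0.
- rewrite zval_one mulr1 /zval big_seq1 /= mul1r /monom_val (bigD1 (Ordinal hi)) //=.
  rewrite ffunE eqxx expr1 big1 ?mulr1 // => j /negbTE hj.
  by rewrite ffunE hj expr0.
Qed.

Lemma gen_idx_zfrac x : gen_idx t (fun i => (i < n)%N && (i != M)) x -> zfrac x.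
Proof.
apply: gen_field_min; first exact: zfrac_closed.
by move=> y [i /andP[hi hM] ->]; apply: zfrac_t.
Qed.

Lemma common_denominator (c : nat -> k) m : (forall i, (i < m)%N -> zfrac (c i)) ->
  exists (b : zterms) (A : nat -> zterms), [/\ terms_avoid b, zval b != 0 &
    forall i, (i < m)%N -> terms_avoid (A i) /\ c i * zval b = zval (A i)].
Proof.
elim: m => [|m IH] h.
  by exists (zone n), (fun _ => [::]); rewrite terms_avoid_one zval_one oner_eq0.
have [b [A [ob nb hA]]] := IH (fun i hi => h i (ltnW hi)).
have [a' [b' [oa' ob' nb' eb']]] := h m (ltnSn m).
exists (zmul b b'), (fun i => if i == m then zmul a' b else zmul (A i) b'); split.
- by rewrite terms_avoid_mul.
- by rewrite zval_mul mulf_neq0.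
- move=> i; rewrite ltnS leq_eqVlt => /orP[/eqP ->|hi].
    by rewrite eqxx terms_avoid_mul // !zval_mul -eb' mulrA mulrAC.
  rewrite (ltn_eqF hi); have [o e] := hA i hi.
  by rewrite terms_avoid_mul // !zval_mul -e mulrA.
Qed.
End FractionsAvoiding.

Section Separation.
Variables (k : fieldType) (t : nat -> k) (n : nat).
Hypothesis t_indep : alg_indep_prime t.
Local Notation monom := (monom n).
Local Notation zval := (zval t).

Lemma separation (q m : nat) (A : nat -> zterms n) (r : nat -> monom) :
  [pchar k].-nat q ->
  (forall j j' x y, (j < m)%N -> (j' < m)%N -> j != j' -> x \in A j -> y \in A j' ->
     monom_mul (monom_exp q x.1) (r j) != monom_mul (monom_exp q y.1) (r j')) ->
  \sum_(j < m) zval (A j) ^+ q * monom_val t (r j) = 0 ->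
  forall j, (j < m)%N -> zval (A j) = 0.
Proof.
move=> hq disj hsum j0 hj0.
have q_gt0 : (0 < q)%N by case/andP: hq.
pose Lc := flatten [seq zshift (r j) (zfrob q (A j)) | j <- iota 0 m].
have Lc0 : zval Lc = 0.
  rewrite -hsum zval_flatten big_map.
  rewrite -(big_mkord xpredT (fun j => zval (A j) ^+ q * monom_val t (r j))).
  by rewrite /index_iota subn0; apply: eq_bigr => j _; rewrite zval_shift zval_frob.
apply: zval_coef0 => e.
have [/mapP[y yA ye]|enot] := boolP (e \in map fst (A j0)); last by rewrite zcoef_notin.
have := zval_eq0_coef t_indep Lc0 (monom_mul (monom_exp q e) (r j0)).
rewrite zcoef_flatten big_map (bigD1_seq j0) ?iota_uniq ?mem_iota //=.
rewrite big1_seq ?addr0 => [|j /andP[jj0 jin]]; last first.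
  rewrite zcoef_shift_frob big_seq_cond big1 // => x /andP[xA /eqP hx].
  rewrite mem_iota in jin; have := disj j j0 x y (proj2 (andP jin)) hj0 jj0 xA yA.
  by rewrite hx -ye eqxx.
rewrite zcoef_shift_frob.
have -> : \sum_(x <- A j0 | monom_mul (monom_exp q x.1) (r j0) ==
                           monom_mul (monom_exp q e) (r j0)) x.2 ^+ q =
          \sum_(x <- A j0 | x.1 == e) x.2 ^+ q.
  by apply: eq_bigl => x; apply/eqP/eqP => [/monom_mulIl/(monom_expI q_gt0)|->].
rewrite rmorph_sum; under eq_bigr => x _ do rewrite rmorphXn.
by rewrite -expr_sum_pchar // -rmorph_sum => /eqP; rewrite expf_eq0 q_gt0 => /eqP.
Qed.
End Separation.

Section IndependenceConsequences.
Variables (k : fieldType) (t : nat -> k).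
Hypothesis t_indep : alg_indep_prime t.

Lemma t_transcendental M d (c : nat -> k) :
  (forall i, (i < d)%N -> gen_idx t (fun j => j != M) (c i)) ->
  \sum_(i < d) c i * t M ^+ i = 0 -> forall i, (i < d)%N -> c i = 0.
Proof.
move=> hc hsum.
have [N hN] := gen_idx_finite_family hc.
set n := maxn N M.+1; have hM : (M < n)%N by rewrite leq_maxr.
have hfrac i : (i < d)%N -> zfrac t n M (c i).
  move=> hi; apply: gen_idx_zfrac; apply: gen_idx_mono (hN i hi) => j /andP[hj ->].
  by rewrite (leq_trans hj) ?leq_maxl.
have [b [A [_ b0 hA]]] := common_denominator hfrac.
pose xM (i : nat) : monom n := [ffun j => if j == Ordinal hM then i else 0%N].
have xM_val i : monom_val t (xM i) = t M ^+ i.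
  rewrite /monom_val (bigD1 (Ordinal hM)) //= ffunE eqxx big1 ?mulr1 // => j /negbTE hj.
  by rewrite ffunE hj expr0.
have hAsum : \sum_(i < d) zval t (A i) ^+ 1 * monom_val t (xM i) = 0.
  transitivity ((\sum_(i < d) c i * t M ^+ i) * zval t b); last by rewrite hsum mul0r.
  rewrite mulr_suml; apply: eq_bigr => i _.
  by rewrite expr1 xM_val -(proj2 (hA i (ltn_ord i))) mulrAC.
have disj j j' (x y : monom n * int) : (j < d)%N -> (j' < d)%N -> j != j' ->
    x \in A j -> y \in A j' ->
    monom_mul (monom_exp 1 x.1) (xM j) != monom_mul (monom_exp 1 y.1) (xM j').
  move=> hj hj' jj' xA yA; apply: contra jj' => /eqP/(congr1 (fun f : monom n => f (Ordinal hM))).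
  have avoidM z (l : zterms n) : terms_avoid M l -> z \in l -> z.1 (Ordinal hM) = 0%N.
    by move=> /allP hl /hl /forallP/(_ (Ordinal hM)); rewrite eqxx => /eqP.
  rewrite !ffunE eqxx (avoidM x (A j) (proj1 (hA j hj)) xA).
  by rewrite (avoidM y (A j') (proj1 (hA j' hj')) yA) !muln0 !add0n => ->.
move=> i hi; have := separation t_indep (isT : [pchar k].-nat 1) disj hAsum hi.
by rewrite -(proj2 (hA i hi)) => /eqP; rewrite mulf_eq0 (negbTE b0) orbF => /eqP.
Qed.

Lemma p_independent p m n0 (R : nat -> nat -> nat) (c : nat -> k) :
  (forall x : k, in_gen_field (fun y => exists i, y = t i) x) -> p \in [pchar k] ->
  (forall j i, (R j i < p)%N) ->
  (forall j j', (j < m)%N -> (j' < m)%N -> j != j' -> exists2 i, (i < n0)%N & R j i != R j' i) ->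
  \sum_(j < m) c j ^+ p * \prod_(i < n0) t i ^+ R j i = 0 ->
  forall j, (j < m)%N -> c j = 0.
Proof.
move=> k_gen hp Rp Rdist hsum.
have [N hN] : exists N, forall j, (j < m)%N -> gen_idx t (fun i => (i < N)%N && true) (c j).
  apply: gen_idx_finite_family => j _.
  by apply: gen_field_mono (k_gen (c j)) => y [i ->]; exists i.
set n := maxn N n0.
have hfrac j : (j < m)%N -> zfrac t n n (c j).
  move=> hj; apply: gen_idx_zfrac; apply: gen_idx_mono (hN j hj) => i /andP[hi _].
  by rewrite ltn_eqF (leq_trans hi) ?leq_maxl.
have [b [A [_ b0 hA]]] := common_denominator hfrac.
pose Rf (j : nat) : monom n := [ffun i : 'I_n => if (i < n0)%N then R j i else 0%N].
have Rf_val j : monom_val t (Rf j) = \prod_(i < n0) t i ^+ R j i.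
  rewrite (big_ord_widen n (fun i => t i ^+ R j i)) ?leq_maxr // big_mkcond /=.
  by apply: eq_bigr => i _; rewrite ffunE; case: ifP.
have hAsum : \sum_(j < m) zval t (A j) ^+ p * monom_val t (Rf j) = 0.
  transitivity ((\sum_(j < m) c j ^+ p * \prod_(i < n0) t i ^+ R j i) * zval t b ^+ p).
    rewrite mulr_suml; apply: eq_bigr => j _.
    by rewrite Rf_val -(proj2 (hA j (ltn_ord j))) exprMn mulrAC.
  by rewrite hsum mul0r.
have disj j j' (x y : monom n * int) : (j < m)%N -> (j' < m)%N -> j != j' ->
    x \in A j -> y \in A j' ->
    monom_mul (monom_exp p x.1) (Rf j) != monom_mul (monom_exp p y.1) (Rf j').
  move=> hj hj' jj' _ _; have [i hi Rji] := Rdist j j' hj hj' jj'.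
  have hin : (i < n)%N by rewrite (leq_trans hi) ?leq_maxr.
  apply: contra Rji => /eqP/(congr1 (fun f : monom n => f (Ordinal hin))).
  rewrite !ffunE /= hi => /(congr1 (modn^~ p)).
  by rewrite !(mulnC p) !modnMDl !modn_small ?Rp // => ->.
have hq : [pchar k].-nat p by rewrite pnatE ?(pcharf_prime hp).
move=> j hj; have := separation t_indep hq disj hAsum hj.
by rewrite -(proj2 (hA j hj)) => /eqP; rewrite mulf_eq0 (negbTE b0) orbF => /eqP.
Qed.
End IndependenceConsequences.

(* The field k(s_1): since s_1^p = t_1 is not a p-th power, 1, s_1, ...,
   s_1^(p-1) form a k-basis of it; likewise s_1, s_2, ... are k-independent. *)
Section FieldOfFirstRoot.
Variables (p : nat) (k : fieldType).
Hypothesis k_char : p \in [pchar k].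
Variable t : nat -> k.
Hypothesis t_indep : alg_indep_prime t.
Hypothesis k_gen : forall x : k, in_gen_field (fun y => exists i, y = t i) x.
Variables (L : fieldType) (iota : {rmorphism k -> L}) (s : nat -> L).
Hypothesis s_root : forall i, s i ^+ p = iota (t i).

Lemma p_prime : prime p. Proof. exact: pcharf_prime k_char. Qed.
Lemma p_gt0 : (0 < p)%N. Proof. exact: prime_gt0 p_prime. Qed.

Lemma frobenius_L : [pchar L].-nat p.
Proof. by rewrite pnatE ?p_prime // (rmorph_pchar iota k_char). Qed.

(* a k-linear relation among the s_i, raised to the p-th power, is a relation
   among monomials in the t_i with coefficients in k^p *)
Lemma frob_relation I (r : seq I) (c : I -> k) (y : I -> L) (a : I -> k) :
  (forall i, y i ^+ p = iota (a i)) -> \sum_(i <- r) iota (c i) * y i = 0 ->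
  \sum_(i <- r) c i ^+ p * a i = 0.
Proof.
move=> hy h; apply: (fmorph_inj iota); rewrite rmorph0 rmorph_sum.
transitivity ((\sum_(i <- r) iota (c i) * y i) ^+ p); last first.
  by rewrite h expr0n gtn_eqF ?p_gt0.
rewrite expr_sum_pchar ?frobenius_L //; apply: eq_bigr => i _.
by rewrite exprMn hy rmorphM rmorphXn.
Qed.

Lemma s1_powers_free (c : nat -> k) :
  \sum_(j < p) iota (c j) * s 1 ^+ j = 0 -> forall j, (j < p)%N -> c j = 0.
Proof.
move=> /(@frob_relation _ _ _ _ (fun j : 'I_p => t 1 ^+ j)) h.
pose R (j i : nat) := if i == 1%N then (j %% p)%N else 0%N.
apply: (p_independent t_indep k_gen k_char (R := R) (n0 := 2)).
- by move=> j i; rewrite /R; case: ifP => _; rewrite ?ltn_pmod ?p_gt0.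
- by move=> j j' hj hj' jj'; exists 1%N; rewrite // /R /= !modn_small.
- apply: etrans (h _) => [|j]; last by rewrite exprAC s_root rmorphXn.
  apply: eq_bigr => j _.
  by rewrite big_ord_recr big_ord1 /R /= expr0 mul1r modn_small.
Qed.

Lemma s_free (n : nat) (c : nat -> k) :
  \sum_(j < n) iota (c j) * s j.+1 = 0 -> forall j, (j < n)%N -> c j = 0.
Proof.
move=> /(@frob_relation _ _ _ _ (fun j : 'I_n => t j.+1)) h.
pose R (j i : nat) : nat := (i == j.+1) && (j < n)%N.
apply: (p_independent t_indep k_gen k_char (R := R) (n0 := n.+1)).
- by move=> j i; rewrite /R; case: (_ && _); rewrite ?prime_gt1 ?p_gt0 ?p_prime.
- move=> j j' hj hj' jj'; exists j.+1; first by rewrite ltnS.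
  by rewrite /R eqxx eqSS eq_sym (negbTE jj') hj.
- apply: etrans (h (fun i => s_root i.+1)); apply: eq_bigr => j _; congr (_ * _).
  have hj : (j.+1 < n.+1)%N by rewrite ltnS.
  rewrite (bigD1 (Ordinal hj)) //= big1 ?mulr1 ?/R /= ?eqxx ?ltn_ord ?expr1 //.
  move=> i /eqP hi; case: eqP => [hie|_]; last by rewrite expr0.
  by case: hi; apply: val_inj.
Qed.

(* the k-span of 1, s_1, ..., s_1^(p-1); it is a field, hence equals k(s_1) *)
Definition span_s1 (y : L) :=
  exists c : nat -> k, y = \sum_(j < p) iota (c j) * s 1 ^+ j.

Lemma span_s1_const a : span_s1 (iota a).
Proof.
exists (fun j => if j == 0%N then a else 0).
rewrite -(prednK p_gt0) big_ord_recl /= expr0 mulr1 big1 ?addr0 // => j _.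
by rewrite rmorph0 mul0r.
Qed.
Lemma span_s1_0 : span_s1 0. Proof. by rewrite -(rmorph0 iota); apply: span_s1_const. Qed.
Lemma span_s1_1 : span_s1 1. Proof. by rewrite -(rmorph1 iota); apply: span_s1_const. Qed.
Lemma span_s1D y z : span_s1 y -> span_s1 z -> span_s1 (y + z).
Proof.
move=> [c ->] [c' ->]; exists (fun j => c j + c' j).
by rewrite -big_split; apply: eq_bigr => j _; rewrite rmorphD mulrDl.
Qed.
Lemma span_s1N y : span_s1 y -> span_s1 (- y).
Proof.
move=> [c ->]; exists (fun j => - c j).
by rewrite -sumrN; apply: eq_bigr => j _; rewrite rmorphN mulNr.
Qed.
Lemma span_s1Z a y : span_s1 y -> span_s1 (iota a * y).
Proof.
move=> [c ->]; exists (fun j => a * c j).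
by rewrite mulr_sumr; apply: eq_bigr => j _; rewrite rmorphM mulrA.
Qed.
Lemma span_s1_sum I (r : seq I) (P : pred I) (F : I -> L) :
  (forall i, P i -> span_s1 (F i)) -> span_s1 (\sum_(i <- r | P i) F i).
Proof.
move=> h; elim/big_rec: _ => [|i x Pi Sx]; first exact: span_s1_0.
by apply: span_s1D => //; apply: h.
Qed.
(* multiplication by s_1 shifts the coordinates, using s_1^p = t_1 *)
Lemma span_s1_Ms1 y : span_s1 y -> span_s1 (y * s 1).
Proof.
move=> [c ->]; have [p' hp'] : exists p', p = p'.+1 by exists p.-1; rewrite prednK // p_gt0.
exists (fun j => if j == 0%N then c p' * t 1 else c j.-1).
rewrite hp' mulr_suml big_ord_recr /= big_ord_recl /= expr0 mulr1 addrC; congr (_ + _).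
  by rewrite rmorphM -(s_root 1) hp' -mulrA -exprSr.
by apply: eq_bigr => j _ /=; rewrite -mulrA -exprSr add0n.
Qed.
Lemma span_s1M y z : span_s1 y -> span_s1 z -> span_s1 (y * z).
Proof.
move=> hy [c ->]; rewrite mulr_sumr; apply: span_s1_sum => j _.
rewrite mulrCA; apply: span_s1Z.
elim: (nat_of_ord j) => [|m IH]; first by rewrite expr0 mulr1.
by rewrite exprSr mulrA; apply: span_s1_Ms1.
Qed.
Lemma span_s1X y m : span_s1 y -> span_s1 (y ^+ m).
Proof.
move=> hy; elim: m => [|m IH]; first by rewrite expr0; apply: span_s1_1.
by rewrite exprS; apply: span_s1M.
Qed.
Lemma span_s1_frob y : span_s1 y -> exists a, y ^+ p = iota a.
Proof.
move=> [c ->]; exists (\sum_(j < p) c j ^+ p * t 1 ^+ j).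
rewrite expr_sum_pchar ?frobenius_L // rmorph_sum; apply: eq_bigr => j _.
by rewrite exprMn exprAC s_root rmorphM !rmorphXn.
Qed.
Lemma span_s1V y : span_s1 y -> span_s1 y^-1.
Proof.
move=> hy; have [->|y0] := eqVneq y 0; first by rewrite invr0; apply: span_s1_0.
have [a ha] := span_s1_frob hy.
have -> : y^-1 = iota a^-1 * y ^+ p.-1.
  rewrite fmorphV -ha; apply: (mulfI y0); rewrite mulfV // mulrCA -exprS prednK ?p_gt0 //.
  by rewrite mulVf // expf_neq0.
by apply: span_s1Z; apply: span_s1X.
Qed.
Lemma span_s1_closed : subfield_closed span_s1.
Proof.
split; [exact: span_s1_1 | | exact: span_s1M | exact: span_s1V].
by move=> x y hx hy; apply: span_s1D => //; apply: span_s1N.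
Qed.

Lemma gen_s1_span y : in_ext_gen iota (fun y => y = s 1%N) y <-> span_s1 y.
Proof.
split.
- move=> hy; apply: (gen_field_min span_s1_closed _ hy) => z [[a ->]|->]; first exact: span_s1_const.
  by rewrite -[s 1]mul1r; apply: span_s1_Ms1; apply: span_s1_1.
- have hF := gen_field_closed (fun y => (exists a, y = iota a) \/ y = s 1).
  move=> [c ->]; apply: (subfield_sum _ hF) => j _; apply: (subfieldM hF).
    by apply: gen_field_sub; left; exists (c j).
  by apply: (subfieldX _ hF); apply: gen_field_sub; right.
Qed.
End FieldOfFirstRoot.

Lemma horner_shift_factor (R : comNzRingType) (q : {poly R}) a h :
  exists r, q.[a + h] = q.[a] + h * r.
Proof.
elim/poly_ind: q => [|q c [r hr]]; first by exists 0; rewrite !horner0 mulr0 addr0.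
exists (q.[a] + r * (a + h)).
rewrite !hornerMXaddC hr mulrDl (mulrDr q.[a]) (mulrDr h) (mulrC q.[a] h) -(mulrA h r).
by rewrite -!addrA; congr (_ + _); rewrite addrA addrC.
Qed.

Section TruncationFacts.
Variable R : comNzRingType.

Lemma coef_horner_agree (q : {poly {poly R}}) (a b r : {poly R}) m :
  b = a + 'X^m * r -> forall i, (i < m)%N -> (q.[b])`_i = (q.[a])`_i.
Proof.
move=> -> i hi; have [r' ->] := horner_shift_factor q a ('X^m * r).
by rewrite coefD -mulrA coefXnM hi addr0.
Qed.

Lemma sum_split_Xn (F : nat -> R) (e : nat -> nat) m N :
  (1 <= m <= N)%N -> (forall i, (m <= i)%N -> (m <= e i)%N) ->
  \sum_(1 <= i < N) F i *: 'X^(e i) =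
  \sum_(1 <= i < m) F i *: 'X^(e i) + 'X^m * \sum_(m <= i < N) F i *: 'X^(e i - m)
  :> {poly R}.
Proof.
move=> /andP[h1 h2] he; rewrite (@big_cat_nat _ _ _ m 1 N) //=; congr (_ + _).
rewrite mulr_sumr big_nat_cond [RHS]big_nat_cond; apply: eq_bigr => i /andP[/andP[hi _] _].
by rewrite -scalerAr -exprD subnKC // he.
Qed.

Lemma convolution_lowest (A B : nat -> R) n m :
  (forall i, (i < n)%N -> A i = 0) -> (forall i, (i < m)%N -> B i = 0) ->
  (forall j, (j < n + m)%N -> \sum_(i < j.+1) A i * B (j - i)%N = 0) /\
  \sum_(i < (n + m).+1) A i * B (n + m - i)%N = A n * B m.
Proof.
move=> hA hB; have low_i (j : nat) (i : 'I_j.+1) : (j - i < m)%N = (j < i + m)%N.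
  by rewrite ltn_subLR // -ltnS.
split=> [j hj|].
  apply: big1 => i _; have [hin|hni] := ltnP i n; first by rewrite hA ?mul0r.
  by rewrite hB ?mulr0 // low_i (leq_trans hj) // leq_add2r.
have hn : (n < (n + m).+1)%N by rewrite ltnS leq_addr.
rewrite (bigD1 (Ordinal hn)) //= addKn big1 ?addr0 // => i /eqP hi.
have [hin|hni] := ltnP i n; first by rewrite hA ?mul0r.
rewrite hB ?mulr0 // low_i ltn_add2r ltn_neqAle hni andbT eq_sym.
by apply/eqP => h; apply: hi; apply: val_inj.
Qed.
End TruncationFacts.

Section PowerSeriesCoefficients.
Variables (k L : fieldType) (iota : {rmorphism k -> L}) (s : nat -> L).
Local Notation pc := (pi_coef iota s).

Definition pi_trunc N (f : {poly {poly k}}) : {poly L} :=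
  (map_poly (map_poly iota) f).[sigmaN s N].

Lemma pi_trunc_coef f n N : (n < N)%N -> (pi_trunc N f)`_n = pc f n.
Proof.
move=> hN; apply: coef_horner_agree (ltnSn n); rewrite /sigmaN.
exact: (@sum_split_Xn L s (fun i => i) n.+1 N).
Qed.

Lemma pi_truncM N f g : pi_trunc N (f * g) = pi_trunc N f * pi_trunc N g.
Proof. by rewrite /pi_trunc rmorphM hornerM. Qed.
Lemma pi_truncC N (a : {poly k}) : pi_trunc N a%:P = map_poly iota a.
Proof. by rewrite /pi_trunc map_polyC hornerC. Qed.

Lemma pi_coefM f g n : pc (f * g) n = \sum_(i < n.+1) pc f i * pc g (n - i)%N.
Proof.
rewrite -(pi_trunc_coef _ (ltnSn n)) pi_truncM coefM; apply: eq_bigr => i _.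
by rewrite !pi_trunc_coef // ltnS leq_subr.
Qed.
Lemma pi_coefD f g n : pc (f + g) n = pc f n + pc g n.
Proof. by rewrite -!(pi_trunc_coef _ (ltnSn n)) /pi_trunc rmorphD hornerD coefD. Qed.
Lemma pi_coefC (a : k) n : pc (a%:P)%:P n = if n == 0%N then iota a else 0.
Proof. by rewrite -(pi_trunc_coef _ (ltnSn n)) pi_truncC map_polyC coefC. Qed.
Lemma pi_coef0 n : pc 0 n = 0.
Proof. by rewrite -(pi_trunc_coef _ (ltnSn n)) pi_truncC rmorph0 coef0. Qed.

Lemma pi_coef_lowM f g n m :
  (forall i, (i < n)%N -> pc f i = 0) -> (forall i, (i < m)%N -> pc g i = 0) ->
  (forall j, (j < n + m)%N -> pc (f * g) j = 0) /\ pc (f * g) (n + m) = pc f n * pc g m.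
Proof.
move=> hf hg; have [h1 h2] := convolution_lowest hf hg.
by split; [move=> j hj; rewrite pi_coefM h1 | rewrite pi_coefM h2].
Qed.

Lemma pi_ordM f g n m : pi_ord iota s f n -> pi_ord iota s g m ->
  pi_ord iota s (f * g) (n + m) /\ pc (f * g) (n + m) = pc f n * pc g m.
Proof.
move=> [nf hf] [ng hg]; have [h1 h2] := pi_coef_lowM hf hg.
by rewrite /pi_ord h2 mulf_neq0.
Qed.

Lemma pi_ord1 : pi_ord iota s 1 0.
Proof. by split=> //; rewrite -[1]/((1%:P)%:P) pi_coefC rmorph1 oner_eq0. Qed.
End PowerSeriesCoefficients.

(* Splitting f(u, v) = sum_(j < p) f_j(u, v^p) v^j.  Since sigma^p = rho is
   the series sum_i t_i x^(ip) over k and sigma = x w with w(0) = s_1,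
   pi(f) = sum_(j < p) x^j f_j(x, rho(x)) w(x)^j. *)
Section PComponents.
Variables (p : nat) (k : fieldType).
Hypothesis k_char : p \in [pchar k].
Variables (t : nat -> k) (L : fieldType) (iota : {rmorphism k -> L}) (s : nat -> L).
Hypothesis s_root : forall i, s i ^+ p = iota (t i).

Definition rho_trunc N : {poly k} := \sum_(1 <= i < N) t i *: 'X^(i * p).
Definition w_trunc N : {poly L} := \sum_(1 <= i < N) s i *: 'X^(i.-1).
Definition pcomp (f : {poly {poly k}}) j : {poly {poly k}} :=
  \poly_(i < size f) f`_(i * p + j).
Definition pcomp_rho f j N : {poly k} := (pcomp f j).[rho_trunc N].

Lemma sigma_frob N : sigmaN s N ^+ p = map_poly iota (rho_trunc N).
Proof.
have hpL : [pchar {poly L}].-nat p.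
  by rewrite pnatE ?(pcharf_prime k_char) // pchar_poly (rmorph_pchar iota k_char).
rewrite /sigmaN expr_sum_pchar // /rho_trunc rmorph_sum; apply: eq_bigr => i _.
rewrite exprZn -exprM s_root; symmetry.
by rewrite -[LHS]/(map_poly iota (t i *: 'X^(i * p))) map_polyZ map_polyXn.
Qed.

Lemma sigma_Xw N : sigmaN s N = 'X * w_trunc N.
Proof.
rewrite /sigmaN /w_trunc mulr_sumr big_nat_cond [RHS]big_nat_cond.
by apply: eq_bigr => i /andP[/andP[hi _] _]; rewrite -scalerAr -exprS prednK.
Qed.

Lemma w_trunc0 N : (1 < N)%N -> (w_trunc N)`_0 = s 1.
Proof.
move=> hN; rewrite /w_trunc coef_sum big_ltn // coefZ coefXn /= mulr1.
rewrite big_nat_cond big1 ?addr0 // => i /andP[/andP[hi _] _].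
by rewrite coefZ coefXn; case: i hi => [|[|i]] //= _; rewrite mulr0.
Qed.

Lemma coef_w_truncX N j : (1 < N)%N -> (w_trunc N ^+ j)`_0 = s 1 ^+ j.
Proof. by move=> hN; rewrite -horner_coef0 horner_exp horner_coef0 w_trunc0. Qed.

Lemma rho_trunc_coef (g : {poly {poly k}}) a N : (a < N)%N ->
  (g.[rho_trunc N])`_a = (g.[rho_trunc a.+1])`_a.
Proof.
move=> hN; have p_gt0 : (0 < p)%N by apply/prime_gt0/(pcharf_prime k_char).
apply: coef_horner_agree (ltnSn a); rewrite /rho_trunc.
apply: (@sum_split_Xn k t (fun i => i * p)%N a.+1 N) => // i hi.
by rewrite (leq_trans hi) // leq_pmulr.
Qed.

Lemma pcomp_decomp f : f = \sum_(j < p) (pcomp f j \Po 'X^p) * 'X^j.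
Proof.
have p_gt0 : (0 < p)%N by apply/prime_gt0/(pcharf_prime k_char).
apply/polyP => m; rewrite coef_sum.
have hm : (m %% p < p)%N by rewrite ltn_pmod.
rewrite (bigD1 (Ordinal hm)) //= big1 ?addr0.
  have e : (m - m %% p = m %/ p * p)%N by rewrite {1}(divn_eq m p) addnK.
  rewrite coefMXn ltnNge leq_mod /= coef_comp_poly_Xn // e.
  rewrite dvdn_mull // mulnK // coef_poly -divn_eq.
  by case: ltnP => // hs; rewrite nth_default // (leq_trans hs) // leq_div.
move=> j /eqP hj; rewrite coefMXn; case: ltnP => // hjm.
rewrite coef_comp_poly_Xn //; case: ifP => // hd.
exfalso; apply: hj; apply: val_inj => /=.
by move: hd; rewrite -eqn_mod_dvd // => /eqP ->; rewrite modn_small.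
Qed.

Lemma pi_trunc_decomp f N : pi_trunc iota s N f =
  \sum_(j < p) map_poly iota ('X^j * pcomp_rho f j N) * w_trunc N ^+ j.
Proof.
rewrite {1}(pcomp_decomp f) /pi_trunc rmorph_sum horner_sum; apply: eq_bigr => j _.
rewrite rmorphM /= map_comp_poly !rmorphXn /= !map_polyX hornerM horner_comp !hornerXn.
rewrite sigma_frob horner_map sigma_Xw exprMn rmorphM /= map_polyXn mulrA.
by rewrite [_ * 'X^j]mulrC.
Qed.
End PComponents.

(* Subrings given as predicates, and polynomials with coefficients in them;
   used to see that the coefficients of g(x, rho'(x) + Y x^(Mp)) avoid t_M. *)
Definition subring_pred (R : comNzRingType) (F : R -> Prop) := [/\ F 0, F 1,
  (forall x y, F x -> F y -> F (x + y)) & (forall x y, F x -> F y -> F (x * y))].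
Definition poly_over_pred (R : comNzRingType) (F : R -> Prop) (P : {poly R}) :=
  forall i, F P`_i.

Section SubringPolynomials.
Variables (R : comNzRingType) (F : R -> Prop).
Hypothesis hF : subring_pred F.

Lemma subring_sum I (r : seq I) (P : pred I) (G : I -> R) :
  (forall i, P i -> F (G i)) -> F (\sum_(i <- r | P i) G i).
Proof.
have [h0 _ hD _] := hF; move=> hG; elim/big_rec: _ => [|i x Pi Fx] //.
by apply: hD => //; apply: hG.
Qed.
Lemma subringX x m : F x -> F (x ^+ m).
Proof.
have [_ h1 _ hM] := hF; move=> hx; elim: m => [|m IH]; first by rewrite expr0.
by rewrite exprS; apply: hM.
Qed.
Lemma poly_over_subring : subring_pred (poly_over_pred F).
Proof.
have [h0 h1 hD hM] := hF; split.
- by move=> i; rewrite coef0.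
- by move=> i; rewrite coefC; case: ifP.
- by move=> a b ha hb i; rewrite coefD; apply: hD.
- move=> a b ha hb i; rewrite coefM; apply: subring_sum => j _; exact: hM.
Qed.
Lemma poly_over_C c : F c -> poly_over_pred F c%:P.
Proof. by have [h0 _ _ _] := hF; move=> hc i; rewrite coefC; case: ifP. Qed.
Lemma poly_over_Xn m : poly_over_pred F 'X^m.
Proof. by have [h0 h1 _ _] := hF; move=> i; rewrite coefXn; case: (_ == _). Qed.
End SubringPolynomials.

Lemma comp_linear_over (R : comNzRingType) (F : R -> Prop) (g : {poly {poly R}})
    (a c : {poly R}) : subring_pred F ->
  (forall j, poly_over_pred F g`_j) -> poly_over_pred F a -> poly_over_pred F c ->
  poly_over_pred (poly_over_pred F) (g \Po (a%:P + c *: 'X)).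
Proof.
move=> hF hg ha hc; have hFx := poly_over_subring hF.
have hFxy := poly_over_subring hFx; have [_ _ hD hM] := hFxy.
have hY : poly_over_pred (poly_over_pred F) (a%:P + c *: 'X).
  rewrite -mul_polyC -['X]expr1.
  exact: hD (poly_over_C hFx ha) (hM _ _ (poly_over_C hFx hc) (poly_over_Xn hFx 1)).
rewrite comp_polyE; apply: (subring_sum hFxy) => i _; rewrite -mul_polyC.
exact: hM (poly_over_C hFx (hg i)) (subringX hFxy _ hY).
Qed.

Lemma subfield_subring (K : fieldType) (F : K -> Prop) : subfield_closed F -> subring_pred F.
Proof.
move=> hF; split; [exact: subfield0 | exact: subfield1 | |].
- by move=> x y; apply: subfieldD.
- by move=> x y; apply: subfieldM.
Qed.

Lemma comp_linear_top (R : idomainType) (g : {poly R}) (a c : R) : c != 0 ->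
  size (g \Po (a%:P + c *: 'X)) = size g /\
  (g \Po (a%:P + c *: 'X))`_(size g).-1 = lead_coef g * c ^+ (size g).-1.
Proof.
move=> c0; have sizeY : size (a%:P + c *: 'X) = 2%N.
  rewrite addrC size_polyDl size_scale ?size_polyX //.
  by rewrite (leq_ltn_trans (size_polyC_leq1 _)) // size_scale ?size_polyX.
have leadY : lead_coef (a%:P + c *: 'X) = c.
  by rewrite lead_coefE sizeY coefD coefC coefZ coefX mulr1 add0r.
split; first exact: size_comp_poly2.
by rewrite -[in RHS]leadY -lead_coef_comp ?sizeY // lead_coefE size_comp_poly2.
Qed.

(* rho(x) = sum_i t_i x^(ip) is transcendental over k(x): g(x, rho(x)) <> 0
   for every nonzero g in k[x][Y].  The coefficients of g avoid some t_M;
   isolating the term t_M x^(Mp) of rho writes the coefficient of x^n of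
   g(x, rho) as a polynomial in t_M with coefficients avoiding t_M, whose
   top coefficient is nonzero for a suitable n. *)
Section RhoTranscendental.
Variables (p : nat) (k : fieldType).
Hypothesis k_char : p \in [pchar k].
Variable t : nat -> k.
Hypothesis t_indep : alg_indep_prime t.
Hypothesis k_gen : forall x : k, in_gen_field (fun y => exists i, y = t i) x.

Lemma poly_coefs_bounded (P : {poly k}) : exists N, forall l,
  gen_idx t (fun i => (i < N)%N && true) P`_l.
Proof.
have [N hN] : exists N, forall l, (l < size P)%N -> gen_idx t (fun i => (i < N)%N && true) P`_l.
  apply: gen_idx_finite_family => l _.
  by apply: gen_field_mono (k_gen _) => y [i ->]; exists i.
exists N => l; have [hl|hl] := ltnP l (size P); first exact: hN.
by rewrite nth_default //; apply: subfield0 (gen_field_closed _).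
Qed.

Lemma coefs_avoid_index (g : {poly {poly k}}) : exists2 M, (0 < M)%N &
  forall j l, gen_idx t (fun i => i != M) (g`_j)`_l.
Proof.
pose Q N j := forall l, gen_idx t (fun i => (i < N)%N && true) (g`_j)`_l.
have [N hN] : exists N, forall j, (j < size g)%N -> Q N j.
  apply: finite_bound => [N N' j hNN' hQ l|j _]; first exact: gen_idx_bounded_mono (hQ l).
  exact: poly_coefs_bounded.
exists N.+1 => // j l; have [hj|hj] := ltnP j (size g).
  by apply: gen_idx_mono (hN j hj l) => i /andP[hi _]; rewrite neq_ltn ltnS ltnW.
by rewrite (nth_default _ hj) coef0; apply: subfield0 (gen_field_closed _).
Qed.

Lemma rho_transcendental (g : {poly {poly k}}) : g != 0 ->
  exists n, (g.[rho_trunc p t n.+1])`_n != 0.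
Proof.
move=> g0; have p_gt0 : (0 < p)%N by apply/prime_gt0/(pcharf_prime k_char).
have [M M_gt0 g_avoid] := coefs_avoid_index g.
pose KM := gen_idx t (fun i => i != M).
have KM_ring : subring_pred KM by apply/subfield_subring/gen_field_closed.
set d := (size g).-1; set q := lead_coef g; set o := (size q).-1.
have q0 : q != 0 by rewrite lead_coef_eq0.
pose n := (M * p * d + o)%N; exists n; apply/negP => /eqP gn0.
pose N := (maxn n M).+1.
have [hnN hMN] : (n < N)%N /\ (M < N)%N by rewrite /N !ltnS leq_maxl leq_maxr.
pose rho' := \sum_(1 <= i < N | i != M) t i *: 'X^(i * p).
pose c : {poly k} := 'X^(M * p).
pose Phi := g \Po (rho'%:P + c *: 'X).
have [size_Phi top_Phi] : size Phi = size g /\ Phi`_d = q * c ^+ d.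
  by apply: comp_linear_top; rewrite expf_neq0 ?polyX_eq0.
have gE : (g.[rho_trunc p t N])`_n = \sum_(l < size Phi) (Phi`_l)`_n * t M ^+ l.
  have -> : rho_trunc p t N = (rho'%:P + c *: 'X).[(t M)%:P].
    rewrite /rho_trunc (bigD1_seq M) ?iota_uniq ?mem_index_iota ?M_gt0 ?hMN //=.
    by rewrite hornerD hornerC hornerZ hornerX mulrC mul_polyC addrC.
  rewrite -horner_comp horner_coef coef_sum; apply: eq_bigr => l _.
  by rewrite -rmorphXn coefMC.
have Phi_avoid : poly_over_pred (poly_over_pred KM) Phi.
  apply: comp_linear_over => //; last exact: poly_over_Xn.
  apply: (subring_sum (poly_over_subring KM_ring)) => i hi; rewrite -mul_polyC.
  have [_ _ _ hM] := poly_over_subring KM_ring; apply: hM (poly_over_Xn KM_ring _).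
  by apply: (poly_over_C KM_ring); apply: gen_field_sub; exists i.
have Phi_d : (Phi`_d)`_n = q`_o.
  by rewrite top_Phi -exprM coefMXn /n ltnNge leq_addr /= addKn.
have d_lt : (d < size Phi)%N by rewrite size_Phi /d ltn_predL size_poly_gt0.
rewrite rho_trunc_coef // gn0 in gE.
have := t_transcendental t_indep (fun l _ => Phi_avoid l n) (esym gE) d_lt.
by rewrite Phi_d => /eqP; rewrite -lead_coefE lead_coef_eq0 (negbTE q0).
Qed.
End RhoTranscendental.

(* The leading coefficient of pi(f): with m0 the least order of the series
   x^j f_j(x, rho(x)) (finite by the transcendence of rho), the coefficients
   of pi(f) vanish below x^m0, and the one of x^m0 is
   sum_j c_j s_1^j with c_j in k not all zero, hence nonzero. *)
Section LeadingCoefficient.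
Variables (p : nat) (k : fieldType).
Hypothesis k_char : p \in [pchar k].
Variable t : nat -> k.
Hypothesis t_indep : alg_indep_prime t.
Hypothesis k_gen : forall x : k, in_gen_field (fun y => exists i, y = t i) x.
Variables (L : fieldType) (iota : {rmorphism k -> L}) (s : nat -> L).
Hypothesis s_root : forall i, s i ^+ p = iota (t i).
Local Notation pc := (pi_coef iota s).

Definition pcomp_coef f j i : k := ('X^j * pcomp_rho p t f j i.+1)`_i.

Lemma pcomp_coef_trunc f j i N :
  (i < N)%N -> ('X^j * pcomp_rho p t f j N)`_i = pcomp_coef f j i.
Proof.
move=> hN; rewrite /pcomp_coef !coefXnM; case: ltnP => // hij.
rewrite /pcomp_rho rho_trunc_coef ?(leq_ltn_trans (leq_subr _ _) hN) //.
by rewrite [in RHS]rho_trunc_coef // ltnS leq_subr.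
Qed.

(* some x^j f_j(x, rho(x)) is nonzero, since f <> 0 and rho is transcendental *)
Lemma pcomp_coef_nonzero f : f != 0 -> exists i, [exists j : 'I_p, pcomp_coef f j i != 0].
Proof.
move=> f0; have [j0 hj0] : exists j : 'I_p, pcomp p f j != 0.
  apply/existsP; apply: contraR f0 => /existsPn h.
  rewrite (pcomp_decomp k_char f) big1 // => j _.
  by rewrite (eqP (negPn (h j))) comp_poly0 mul0r.
have [a ha] := rho_transcendental k_char t_indep k_gen hj0.
exists (a + j0)%N; apply/existsP; exists j0.
rewrite /pcomp_coef coefXnM ltnNge leq_addl /= addnK /pcomp_rho rho_trunc_coef //.
by rewrite ltnS leq_addr.
Qed.

(* below the least order m0 of the x^j f_j(x, rho(x)), pi(f) vanishes, and its
   x^m0-coefficient is sum_j c_j s_1^j, using w(0) = s_1 *)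
Lemma pi_coef_upto f m0 :
  (forall (j : 'I_p) i, (i < m0)%N -> pcomp_coef f j i = 0) ->
  forall i, (i <= m0)%N ->
    pc f i = if i == m0 then \sum_(j < p) iota (pcomp_coef f j m0) * s 1 ^+ j else 0.
Proof.
move=> low i hi; pose N := m0.+2.
have term (j : 'I_p) : (map_poly iota ('X^j * pcomp_rho p t f j N) * w_trunc s N ^+ j)`_i =
    if i == m0 then iota (pcomp_coef f j m0) * s 1 ^+ j else 0.
  have coefA i' : (i' < N)%N ->
      (map_poly iota ('X^j * pcomp_rho p t f j N))`_i' = iota (pcomp_coef f j i').
    by move=> hi'; rewrite coef_map pcomp_coef_trunc.
  have hA i' : (i' < m0)%N -> (map_poly iota ('X^j * pcomp_rho p t f j N))`_i' = 0.
    by move=> hi'; rewrite coefA ?low ?rmorph0 // (ltn_trans hi').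
  have hB i' : (i' < 0)%N -> (w_trunc s N ^+ j)`_i' = 0 by [].
  have [h1 h2] := convolution_lowest hA hB; rewrite addn0 in h1 h2.
  rewrite coefM; case: eqP => [->|/eqP im0]; last by rewrite h1 // ltn_neqAle im0 hi.
  by rewrite h2 coefA // coef_w_truncX.
rewrite -(pi_trunc_coef iota s f (_ : (i < N)%N)) ?(leq_ltn_trans hi) //.
rewrite (pi_trunc_decomp k_char s_root) coef_sum.
under eq_bigr => j _ do rewrite term.
by case: eqP => // _; rewrite big1.
Qed.

Lemma pi_leading_coef f : f != 0 -> exists m (c : nat -> k),
  pi_ord iota s f m /\ pc f m = \sum_(j < p) iota (c j) * s 1 ^+ j.
Proof.
move=> f0; have [m0 hm0 m0_min] := ex_minnP (pcomp_coef_nonzero f0).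
have low (j : 'I_p) i : (i < m0)%N -> pcomp_coef f j i = 0.
  move=> hi; apply/eqP; apply: contraTT hi => hn; rewrite -leqNgt.
  by apply: m0_min; apply/existsP; exists j.
have piE := pi_coef_upto low.
exists m0, (pcomp_coef f ^~ m0); split; last by rewrite piE ?eqxx.
split=> [|i hi]; last by rewrite piE ?(ltnW hi) // ltn_eqF.
rewrite piE // eqxx; apply/eqP => h.
have h0 := s1_powers_free k_char t_indep k_gen s_root (c := pcomp_coef f ^~ m0) h.
by case/existsP: hm0 => j /eqP; apply; apply: h0.
Qed.
End LeadingCoefficient.

(* The residue map V -> L: for z = f/g with ord pi(g) = n <= ord pi(f), send
   z to (x^n-coefficient of pi(f)) / (x^n-coefficient of pi(g)). *)
Section ResidueMap.
Variables (p : nat) (k : fieldType).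
Hypothesis k_char : p \in [pchar k].
Variable t : nat -> k.
Hypothesis t_indep : alg_indep_prime t.
Hypothesis k_gen : forall x : k, in_gen_field (fun y => exists i, y = t i) x.
Variables (L : fieldType) (iota : {rmorphism k -> L}) (s : nat -> L).
Hypothesis s_root : forall i, s i ^+ p = iota (t i).
Local Notation pc := (pi_coef iota s).

Definition V_rep (z : QF k) (f g : {poly {poly k}}) (n : nat) :=
  [/\ g != 0, z = tofracK f / tofracK g, pi_ord iota s g n &
      forall m, (m < n)%N -> pc f m = 0].

Lemma tofracK_neq0 (g : {poly {poly k}}) : g != 0 -> tofracK g != 0.
Proof. by move=> g0; rewrite /tofracK tofrac_eq0. Qed.

Lemma V_rep_indep z f g n f' g' n' : V_rep z f g n -> V_rep z f' g' n' ->
  pc f n / pc g n = pc f' n' / pc g' n'.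
Proof.
move=> [g0 ez [gn hg] hf] [g0' ez' [gn' hg'] hf'].
have cross : f * g' = f' * g.
  apply/eqP; rewrite -tofrac_eq !tofracM; apply/eqP.
  have G0 := tofracK_neq0 g0; have G0' := tofracK_neq0 g0'.
  rewrite -[X in X * _](divfK G0) -/(tofracK f) -/(tofracK g) -/(tofracK g').
  by rewrite -/(tofracK f') -ez ez' mulrAC divfK.
have [_ h1] := pi_coef_lowM hf hg'.
have [_ h2] := pi_coef_lowM hf' hg.
by apply/eqP; rewrite eqr_div // -h1 cross addnC h2.
Qed.

Definition residue (z : QF k) : L :=
  let w := epsilon (inhabits (0, 0, 0%N)) (fun w => V_rep z w.1.1 w.1.2 w.2) in
  pc w.1.1 w.2 / pc w.1.2 w.2.

Lemma residueE z f g n : V_rep z f g n -> residue z = pc f n / pc g n.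
Proof.
move=> h; have := epsilon_spec (inhabits (0, 0, 0%N))
  (fun w => V_rep z w.1.1 w.1.2 w.2) (ex_intro _ (f, g, n) h).
by rewrite /residue => /V_rep_indep; apply.
Qed.

Lemma residueD z w : in_V iota s z -> in_V iota s w -> residue (z + w) = residue z + residue w.
Proof.
move=> [f [g [n hz]]] [f' [g' [n' hw]]].
have [g0 ez og hf] := hz; have [g0' ew og' hf'] := hw.
have [ogg eg] := pi_ordM og og'.
have [l1 e1] := pi_coef_lowM hf (proj2 og').
have [l2 e2] := pi_coef_lowM hf' (proj2 og).
have hzw : V_rep (z + w) (f * g' + f' * g) (g * g') (n + n').
  split=> //.
  - by rewrite mulf_neq0.
  - by rewrite ez ew /tofracK addf_div ?tofracK_neq0 // -!tofracM -tofracD.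
  - by move=> m hm; rewrite pi_coefD l1 // l2 ?add0r // addnC.
rewrite (residueE hz) (residueE hw) (residueE hzw) pi_coefD e1 addnC e2 addnC eg.
by rewrite addf_div ?(proj1 og) ?(proj1 og') // mulrC [pc f' n' * _]mulrC.
Qed.

Lemma residueM z w : in_V iota s z -> in_V iota s w -> residue (z * w) = residue z * residue w.
Proof.
move=> [f [g [n hz]]] [f' [g' [n' hw]]].
have [g0 ez og hf] := hz; have [g0' ew og' hf'] := hw.
have [ogg eg] := pi_ordM og og'.
have [l1 e1] := pi_coef_lowM hf hf'.
have hzw : V_rep (z * w) (f * f') (g * g') (n + n').
  by split; rewrite ?mulf_neq0 // ez ew /tofracK mulf_div -!tofracM.
by rewrite (residueE hz) (residueE hw) (residueE hzw) e1 eg mulf_div.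
Qed.

Lemma residue_const (a : k) : residue (tofracK (a%:P)%:P) = iota a.
Proof.
have h : V_rep (tofracK (a%:P)%:P) (a%:P)%:P 1 0.
  split=> //; [exact: oner_neq0 | by rewrite /tofracK tofrac1 divr1 | exact: pi_ord1].
by rewrite (residueE h) pi_coefC -[1]/((1%:P)%:P) pi_coefC rmorph1 divr1.
Qed.

Lemma residue_kernel z : in_V iota s z -> (residue z = 0 <-> in_mV iota s z).
Proof.
move=> [f [g [n hz]]]; have [g0 ez [gn hg] hf] := hz.
rewrite (residueE hz); split.
- move=> /eqP; rewrite mulf_eq0 invr_eq0 (negbTE gn) orbF => /eqP fn.
  exists f, g, n; split=> // m; rewrite leq_eqVlt => /orP[/eqP ->|] //; exact: hf.
- move=> [f' [g' [n' [g0' ez' og' hf']]]].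
  have hz' : V_rep z f' g' n' by split=> // m hm; apply/hf'/ltnW.
  by rewrite -(residueE hz) (residueE hz') hf' // mul0r.
Qed.

Lemma pi_coef_span f n : (forall m, (m < n)%N -> pc f m = 0) -> span_s1 p iota s (pc f n).
Proof.
move=> hf; have [->|f0] := eqVneq f 0; first by rewrite pi_coef0; exact: span_s1_0.
have [m [c [[fm hm] ec]]] := pi_leading_coef k_char t_indep k_gen s_root f0.
have [hmn|hnm] := ltnP m n; first by move/eqP: fm; rewrite hf.
move: hnm; rewrite leq_eqVlt => /orP[/eqP ->|hnm]; first by rewrite ec; exists c.
by rewrite hm //; exact: span_s1_0.
Qed.

Lemma residue_image z : in_V iota s z -> in_ext_gen iota (fun y => y = s 1%N) (residue z).
Proof.
move=> [f [g [n hz]]]; have [g0 ez og hf] := hz.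
rewrite (residueE hz); apply/(gen_s1_span k_char s_root).
apply: subfield_div (span_s1_closed k_char s_root) _ _; first exact: pi_coef_span.
exact: pi_coef_span (proj2 og).
Qed.

(* sum_j c_j s_1^j is the residue of (sum_j c_j u^(p-1-j) v^j) / u^(p-1) *)
Lemma residue_surjective y : in_ext_gen iota (fun y => y = s 1%N) y ->
  exists2 z, in_V iota s z & residue z = y.
Proof.
move/(gen_s1_span k_char s_root) => [c ->].
have p_gt0 : (0 < p)%N by apply/prime_gt0/(pcharf_prime k_char).
set q := p.-1.
pose f : {poly {poly k}} := \sum_(j < p) (c j *: 'X^(q - j))%:P * 'X^j.
pose g : {poly {poly k}} := ('X^q)%:P.
have pi_g i : pc g i = (i == q)%:R.
  by rewrite -(pi_trunc_coef iota s g (ltnSn i)) pi_truncC map_polyXn coefXn.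
have pi_f N : pi_trunc iota s N f = \sum_(j < p) iota (c j) *: ('X^q * w_trunc s N ^+ j).
  rewrite /pi_trunc rmorph_sum horner_sum; apply: eq_bigr => j _.
  rewrite rmorphM /= hornerM map_polyC hornerC map_polyXn hornerXn /=.
  rewrite map_polyZ map_polyXn (sigma_Xw s) exprMn -scalerAl mulrA -exprD subnK //.
  by rewrite /q -ltnS prednK.
have pi_f_coef i : (i <= q)%N ->
    pc f i = if i == q then \sum_(j < p) iota (c j) * s 1 ^+ j else 0.
  move=> hi; rewrite -(pi_trunc_coef iota s f (_ : (i < q.+2)%N)) ?ltnS ?(leq_trans hi) //.
  rewrite pi_f coef_sum; case: eqP => [->|/eqP hiq].
    by apply: eq_bigr => j _; rewrite coefZ coefXnM ltnn subnn coef_w_truncX.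
  by apply: big1 => j _; rewrite coefZ coefXnM ltn_neqAle hiq hi mulr0.
have hw : V_rep (tofracK f / tofracK g) f g q.
  split=> //.
  - by rewrite polyC_eq0 expf_neq0 // polyX_eq0.
  - by split=> [|m hm]; rewrite pi_g ?eqxx ?oner_eq0 // ltn_eqF.
  - by move=> m hm; rewrite pi_f_coef ?ltn_eqF // ltnW.
exists (tofracK f / tofracK g); first by exists f, g, q.
by rewrite (residueE hw) pi_f_coef // eqxx pi_g eqxx divr1.
Qed.
End ResidueMap.

Unset Implicit Arguments.

Theorem mainTheorem13
  (p : nat) (p_prime : prime p)
  (k : fieldType) (k_char : p \in [pchar k])
  (t : nat -> k) (t_indep : alg_indep_prime t)
  (k_gen : forall x : k, in_gen_field (fun y => exists i, y = t i) x)
  (L : closedFieldType) (iota : {rmorphism k -> L})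
  (L_alg : forall x : L, exists q : {poly k}, q != 0 /\ root (map_poly iota q) x)
  (s : nat -> L) (s_root : forall i, s i ^+ p = iota (t i)) :
  (* pi : k[u,v] -> kbar[[x]], u |-> x, v |-> sigma(x), is injective *)
  (forall P : {poly {poly k}}, P != 0 -> exists n, pi_coef iota s P n != 0) /\
  (* V / m_V ~= k(t_1^{1/p}) as k-algebras: a k-algebra map phi on V onto
     k(s 1) whose kernel is m_V *)
  (exists phi : QF k -> L,
     [/\ forall z w, in_V iota s z -> in_V iota s w -> phi (z + w) = phi z + phi w,
         forall z w, in_V iota s z -> in_V iota s w -> phi (z * w) = phi z * phi w,
         forall a : k, phi (tofracK (a%:P)%:P) = iota a &
         forall z, in_V iota s z -> (phi z = 0 <-> in_mV iota s z)] /\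
     (forall z, in_V iota s z -> in_ext_gen iota (fun y => y = s 1%N) (phi z)) /\
     (forall y, in_ext_gen iota (fun y => y = s 1%N) y ->
                   exists2 z, in_V iota s z & phi z = y)) /\
  (* k(t_1^{1/p}) is a finite extension of k *)
  (exists (n : nat) (e : 'I_n -> L),
     (forall i, in_ext_gen iota (fun y => y = s 1%N) (e i)) /\
     spans_over iota (in_ext_gen iota (fun y => y = s 1%N)) e) /\
  (* k({t_i^{1/p} | i >= 1}) has infinite degree over k *)
  (forall n : nat, exists e : 'I_n -> L,
     (forall i, in_ext_gen iota (fun y => exists j, (0 < j)%N /\ y = s j) (e i)) /\
     lin_indep_over iota e).
Proof.
split.
  move=> P P0; have [m [_ [[hm _] _]]] := pi_leading_coef k_char t_indep k_gen s_root P0.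
  by exists m.
split.
  exists (residue iota s); split; first split.
  - exact: residueD.
  - exact: residueM.
  - exact: residue_const.
  - exact: residue_kernel.
  split=> [z|y]; first exact: (residue_image k_char t_indep k_gen s_root).
  exact: (residue_surjective k_char s_root).
split.
  exists p, (fun j : 'I_p => s 1%N ^+ j); split=> [j|x].
    apply/(gen_s1_span k_char s_root)/(span_s1X k_char s_root).
    by rewrite -[s 1]mul1r; apply: (span_s1_Ms1 k_char s_root); apply: span_s1_1.
  by move/(gen_s1_span k_char s_root) => [c ->]; exists (fun j => c j).
move=> n; exists (fun i : 'I_n => s i.+1); split=> [i|c hc i].
  by apply: gen_field_sub; right; exists i.+1.
pose c' (j : nat) := if insub j is Some o then c o else 0.
have hc' : \sum_(j < n) iota (c' j) * s j.+1 = 0.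
  by rewrite -[RHS]hc; apply: eq_bigr => j _; rewrite /c' valK.
by have := s_free k_char t_indep k_gen s_root hc' (ltn_ord i); rewrite /c' valK.
Qed.
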